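(* Let $\mathcal{G}$ be a reaction network with species $X_1,\dots,X_n$, $n\ge2$, and let $\tilde{\mathcal{G}}$ be its homeostasis-associated reaction network. Suppose that for every choice of $n$ distinct reactions $\mathbf{y}_1\to\mathbf{y}'_1,\dots,\mathbf{y}_n\to\mathbf{y}'_n$ of $\tilde{\mathcal{G}}$, $$\det(\mathbf{y}_1,\dots,\mathbf{y}_n)\,\det(\mathbf{y}'_1-\mathbf{y}_1,\dots,\mathbf{y}'_n-\mathbf{y}_n)=0.$$ Then for every choice of positive rate constants $\mathbf{k}$ for $\mathcal{G}$, $\det B(\mathbf{x},\mathbf{k})=0$ for all $\mathbf{x}\in\mathbb{R}^n_{>0}$, where $B$ is the Jacobian $D_{\mathbf{x}}\mathbf{f}(\mathbf{x},\mathbf{k})$ of $\mathcal{G}$ with first row and last column deleted. Consequently, the mass-action input–output system of $\mathcal{G}$ (input $X_1$, output $X_n$) exhibits perfect homeostasis at every linearly stable positive equilibrium: if $(\tilde{\mathbf{x}},\tilde\zeta)$ is such an equilibrium and $\zeta\mapsto\mathbf{x}(\zeta)$ is the smooth branch of equilibria with $\mathbf{x}(\tilde\zeta)=\tilde{\mathbf{x}}$ given by the implicit function theorem, then $\frac{d x_n}{d\zeta}(\zeta)=0$ for all $\zeta$ in a neighbourhood of $\tilde\zeta$.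
   Context: A reaction network with species $X_1,\dots,X_n$ is a finite set of reactions $\mathbf{y}\to\mathbf{y}'$ with $\mathbf{y}\ne\mathbf{y}'\in\mathbb{Z}^n_{\ge0}$. Given positive rate constants $\mathbf{k}$, the mass-action vector field is $\mathbf{f}(\mathbf{x},\mathbf{k})=\sum_{\mathbf{y}\to\mathbf{y}'}k_{\mathbf{y}\to\mathbf{y}'}\mathbf{x}^{\mathbf{y}}(\mathbf{y}'-\mathbf{y})$ on $\mathbb{R}^n_{>0}$. Homeostasis-associated network $\tilde{\mathcal{G}}$ of $\mathcal{G}$: Step 1: replace each reaction $\mathbf{y}\to\mathbf{y}'$ of $\mathcal{G}$ by $\mathbf{y}\to\hat{\mathbf{y}}'$, where $\hat y'_1=y_1$ and $\hat y'_i=y'_i$ for $i\ge2$; reactions that become trivial are discarded and coinciding reactions are identified. Step 2: add the reaction $X_n\to X_1$. Input–output system: $\dot{\mathbf{x}}=\mathbf{f}(\mathbf{x},\mathbf{k})+\zeta\mathbf{e}_1$ with parameter $\zeta$, input $x_1$, output $x_n$. An equilibrium is linearly stable if all eigenvalues of the Jacobian there have negative real part. Perfect homeostasis means the derivative of the input–output function $\zeta\mapsto x_n(\zeta)$ along the equilibrium branch vanishes on an entire interval. *)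

From HB Require Import structures.
From mathcomp Require Import all_boot all_order all_algebra.
From mathcomp Require Import all_classical all_reals all_analysis.
From mathcomp Require Import complex.

Set Implicit Arguments.
Unset Strict Implicit.
Unset Printing Implicit Defensive.

Import Order.TTheory GRing.Theory Num.Theory.
Import numFieldNormedType.Exports.
Local Open Scope ring_scope.

(** Complexes (vectors in Z^n_{>=0}) over species X_1..X_n, indexed by 'I_n;
    species X_1 is [ord0] and species X_n is [ord_max]. *)
Definition cplx (n : nat) := {ffun 'I_n -> nat}.

Definition reaction (n : nat) := (cplx n * cplx n)%type.

Definition is_network (n : nat) (G : seq (reaction n)) : Prop :=
  uniq G /\ (forall r, r \in G -> r.1 != r.2).

Definition monom (R : pzRingType) (n : nat) (x : 'rV[R]_n) (y : cplx n) : R :=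
  \prod_(i < n) x 0 i ^+ y i.

Definition rvec (R : pzRingType) (n : nat) (r : reaction n) : 'rV[R]_n :=
  \row_i ((r.2 i)%:R - (r.1 i)%:R).

Definition massaction (R : pzRingType) (n : nat) (G : seq (reaction n))
  (k : reaction n -> R) (x : 'rV[R]_n) : 'rV[R]_n :=
  \sum_(r <- G) (k r * monom x r.1) *: rvec R r.

(** Jacobian matrix D_x F (x) in the usual convention: entry (i, j) is the
    partial derivative of F_i with respect to x_j.  The library's
    [derive.jacobian F x] (= lin1_mx ('d F x)) acts on row vectors
    (v *m 'J F x = 'd F x v), so it is the transpose of D_x F. *)
Definition Dx (R : realType) (n : nat) (F : 'rV[R]_n -> 'rV[R]_n)
  (x : 'rV[R]_n) : 'M[R]_n := (jacobian F x)^T.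

Definition delete_first_row_last_col (R : Type) (m : nat) (A : 'M[R]_m.+1)
  : 'M[R]_m := row' ord0 (col' ord_max A).

Definition unitc (n : nat) (i : 'I_n) : cplx n := [ffun j => (j == i) : nat].

Definition hat_reaction (m : nat) (r : reaction m.+1) : reaction m.+1 :=
  (r.1, [ffun i => if i == ord0 then r.1 i else r.2 i]).

Definition homeo_network (m : nat) (G : seq (reaction m.+1))
  : seq (reaction m.+1) :=
  undup ([seq r <- map (@hat_reaction m) G | r.1 != r.2]
         ++ [:: (unitc ord_max, unitc ord0)]).

Definition det_cols (R : pzRingType) (n : nat) (v : 'I_n -> 'rV[R]_n) : R :=
  \det (\matrix_(i, j) v j 0 i).

Definition cplx_vec (R : pzRingType) (n : nat) (y : cplx n) : 'rV[R]_n :=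
  \row_i (y i)%:R.

Definition linearly_stable (R : realType) (n : nat) (J : 'M[R]_n) : Prop :=
  forall z : complex.complex R,
    eigenvalue (map_mx (fun a : R => complex.Complex a 0) J) z ->
    complex.Re z < 0.

From HB Require Import structures.
From mathcomp Require Import all_boot all_order all_algebra.
From mathcomp Require Import all_classical all_reals all_analysis.
From mathcomp Require Import complex perm.
From mathcomp Require Import ring lra.
Import Order.TTheory GRing.Theory Num.Theory.
Import numFieldNormedType.Exports.
Local Open Scope ring_scope.

Set Implicit Arguments.
Unset Strict Implicit.
Unset Printing Implicit Defensive.

(* The Jacobian of any mass-action system at x is the sum
   over its reactions r of the rank-one matrices k_r x^{y_r} (y'_r - y_r) (y_r / x)^T,
   so its determinant expands into products det(y_{r_1}, ..., y_{r_n})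
   det(y'_{r_1} - y_{r_1}, ..., y'_{r_n} - y_{r_n}), which all vanish for the
   homeostasis-associated network.  Off its first row, the Jacobian of that network
   agrees with the Jacobian D of G, and its first row is e_n / x_n, contributed by
   X_n -> X_1 alone; expanding along that row gives det B = 0.
   Along the branch of equilibria, differentiating f(x(z)) + z e_1 = 0 gives
   D x' = - e_1, so by Cramer's rule det D * x_n' = +- det B = 0, and det D <> 0
   near the linearly stable equilibrium. *)

Lemma det_colsE (R : comPzRingType) (n : nat) (v : 'I_n -> 'rV[R]_n) :
  det_cols v = \det (\matrix_(i, j) v i 0 j).
Proof.
by rewrite /det_cols -det_tr; congr (\det _); apply/matrixP => i j; rewrite !mxE.
Qed.

Lemma det_cols_zero_col (R : comPzRingType) (n : nat) (v : 'I_n -> 'rV[R]_n)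
    (j : 'I_n) :
  v j = 0 -> det_cols v = 0.
Proof.
move=> vj0; rewrite det_colsE (expand_det_row _ j) big1 // => i _.
by rewrite mxE vj0 mxE mul0r.
Qed.

Lemma det_cols_alternate (R : comPzRingType) (n : nat) (v : 'I_n -> 'rV[R]_n)
    (j1 j2 : 'I_n) :
  j1 != j2 -> v j1 = v j2 -> det_cols v = 0.
Proof.
move=> j12 vj12; rewrite det_colsE (determinant_alternate j12) // => i.
by rewrite !mxE vj12.
Qed.

Lemma det_cols_scale_rows (R : comPzRingType) (n : nat) (c : 'I_n -> R)
    (v : 'I_n -> 'rV[R]_n) :
  det_cols (fun j => \row_i (c i * v j 0 i)) = \prod_i c i * det_cols v.
Proof.
have -> : \prod_i c i = \det (diag_mx (\row_i c i)).
  by rewrite det_diag; apply: eq_bigr => i _; rewrite mxE.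
rewrite /det_cols -det_mulmx mul_diag_mx; congr (\det _).
by apply/matrixP => i j; rewrite !mxE.
Qed.

Lemma det_sum_outer (R : comPzRingType) (n N : nat) (a : 'I_N -> R)
    (u w : 'I_N -> 'rV[R]_n) :
  \det (\matrix_(i, j) \sum_(t < N) a t * u t 0 i * w t 0 j) =
  \sum_(s : {ffun 'I_n -> 'I_N})
    (\prod_i a (s i)) * (\prod_i u (s i) 0 i) * \det (\matrix_(i, j) w (s i) 0 j).
Proof.
rewrite /determinant.
under eq_bigr => sg _.
  rewrite (eq_bigr (fun i => \sum_(t < N) a t * u t 0 i * w t 0 (sg i)));
    last by move=> i _; rewrite mxE.
  rewrite bigA_distr_bigA big_distrr /=.
  over.
rewrite exchange_big /=; apply: eq_bigr => s _.
rewrite big_distrr /=; apply: eq_bigr => sg _.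
rewrite !big_split /= mulrCA; congr (_ * _).
by congr (_ * _); apply: eq_bigr => i _; rewrite mxE.
Qed.

(* Precomposing the index map s with a permutation t multiplies the last
   determinant by the sign of t; averaging over t turns the product of the
   u's into det_cols (u \o s).  Dividing by n! needs characteristic 0. *)
Lemma det_sum_outer_eq0 (R : numDomainType) (n N : nat) (a : 'I_N -> R)
    (u w : 'I_N -> 'rV[R]_n) :
  (forall s : 'I_n -> 'I_N,
     det_cols (fun j => u (s j)) * det_cols (fun j => w (s j)) = 0) ->
  \det (\matrix_(i, j) \sum_(t < N) a t * u t 0 i * w t 0 j) = 0.
Proof.
move=> detuw0; rewrite det_sum_outer.
pose W (s : {ffun 'I_n -> 'I_N}) : 'M[R]_n := \matrix_(i, j) w (s i) 0 j.
pose perm_idx (t : 'S_n) (s : {ffun 'I_n -> 'I_N}) := [ffun i => s (t i)].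
have perm_idx_inj t : injective (perm_idx t).
  move=> s1 s2 /ffunP e; apply/ffunP => i.
  by have := e (t^-1%g i); rewrite !ffunE permKV.
have sum_perm_idx s : \sum_(t : 'S_n)
    (\prod_i a (perm_idx t s i)) * (\prod_i u (perm_idx t s i) 0 i) *
    \det (W (perm_idx t s)) = 0.
  have Ws t : W (perm_idx t s) = row_perm t (W s).
    by apply/matrixP => i j; rewrite !mxE ffunE.
  have detu : det_cols (fun j => u (s j)) =
      \sum_(t : 'S_n) (-1) ^+ t * \prod_i u (s (t i)) 0 i.
    by apply: eq_bigr => t _; congr (_ * _); apply: eq_bigr => i _; rewrite mxE.
  have detw : det_cols (fun j => w (s j)) = \det (W s).
    by rewrite det_colsE; congr (\det _); apply/matrixP => i j; rewrite !mxE.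
  transitivity (\prod_i a (s i) *
    (det_cols (fun j => u (s j)) * det_cols (fun j => w (s j)))); last first.
    by rewrite detuw0 mulr0.
  rewrite detu detw big_distrl big_distrr /=; apply: eq_bigr => t _.
  rewrite Ws row_permE det_mulmx det_perm.
  have -> : \prod_i a (perm_idx t s i) = \prod_i a (s i).
    by rewrite [RHS](reindex_perm t); apply: eq_bigr => i _; rewrite ffunE.
  have -> : \prod_i u (perm_idx t s i) 0 i = \prod_i u (s (t i)) 0 i.
    by apply: eq_bigr => i _; rewrite ffunE.
  by rewrite -!mulrA; congr (_ * _); exact: mulrCA.
have : (\sum_(s : {ffun 'I_n -> 'I_N})
    (\prod_i a (s i)) * (\prod_i u (s i) 0 i) * \det (W s)) *+ #|{perm 'I_n}| = 0.
  rewrite -sumr_const.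
  rewrite (eq_bigr _ (fun t _ => reindex_inj (perm_idx_inj t))) exchange_big /=.
  by rewrite big1 // => s _; exact: sum_perm_idx.
move/eqP; rewrite mulrn_eq0 => /orP[/eqP card0|/eqP //].
suff : (0 < #|{perm 'I_n}|)%N by rewrite card0.
by apply/card_gt0P; exists 1%g.
Qed.

Lemma expand_det_row0_last (R : comPzRingType) (n : nat) (A : 'M[R]_n.+1) :
  (forall j, j != ord_max -> A ord0 j = 0) ->
  \det A = A ord0 ord_max * cofactor A ord0 ord_max.
Proof.
move=> row0; rewrite (expand_det_row _ ord0) (bigD1 ord_max) //= big1 ?addr0 //.
by move=> j /row0 ->; rewrite mul0r.
Qed.

Lemma cramer_delta (R : comPzRingType) (n : nat) (A : 'M[R]_n) (v : 'cV[R]_n)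
    (i j : 'I_n) :
  A *m v = delta_mx i 0 -> \det A * v j 0 = cofactor A i j.
Proof.
move=> Av; have : \adj A *m (A *m v) = \det A *: v.
  by rewrite mulmxA mul_adj_mx mul_scalar_mx.
move/(congr1 (fun M : 'cV[R]_n => M j 0)); rewrite Av !mxE => <-.
rewrite (bigD1 i) //= big1 => [|l /negbTE li]; last by rewrite !mxE li mulr0.
by rewrite !mxE !eqxx mulr1 addr0.
Qed.

Lemma continuous_det (R : numFieldType) (T : topologicalType) (n : nat)
    (A : T -> 'M[R]_n) (t0 : T) :
  (forall i j, {for t0, continuous (fun t => A t i j)}) ->
  {for t0, continuous (fun t => \det (A t))}.
Proof.
move=> cA; rewrite /prop_for /continuous_at /determinant.
apply: cvg_big => [|s _]; first exact: add_continuous.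
apply: cvgM; first exact: cvg_cst.
by apply: cvg_big => [|i _]; [exact: mul_continuous | exact: cA].
Qed.

Lemma is_derive_along_line (R : numFieldType) (V W : normedModType R)
    (f : V -> W) (a v : V) (df : W) :
  is_derive (0 : R) 1 (fun h : R => f (h *: v + a)) df -> is_derive a v f df.
Proof.
have line : (fun h : R => h^-1 *: ((f \o shift a) (h *: v) - f a)) =
    (fun h => h^-1 *:
      (((fun h => f (h *: v + a)) \o shift 0) (h *: (1 : R)) - f (0 *: v + a))).
  by apply: funext => h; rewrite /= scale0r add0r addr0 [h *: 1]mulr1.
by case=> dline Dline; split; rewrite /derivable /derive line.
Qed.

Lemma is_derive_addX (R : numFieldType) (a : R) (p : nat) :
  is_derive (0 : R) 1 (fun t : R => (t + a) ^+ p) (p%:R * a ^+ p.-1).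
Proof.
have dshift : is_derive (0 : R) 1 (fun t : R => t + a) 1.
  by rewrite -[X in is_derive _ _ _ X]addr0; apply: is_deriveD.
by have := is_deriveX p dshift; rewrite add0r exprfctE [_%:A]mulr1.
Qed.

Lemma differentiable_big_sum (R : numFieldType) (V W : normedModType R) (I : Type)
    (s : seq I) (f : I -> V -> W) (x : V) :
  (forall i, differentiable (f i) x) -> differentiable (\sum_(i <- s) f i) x.
Proof.
move=> df; apply: (big_ind (fun g => differentiable g x)) => [|g h dg dh|i _].
- exact: (@differentiable_cst _ _ _ 0 x).
- exact: differentiableD.
- exact: df.
Qed.

Section MassActionJacobian.
Variable R : realType.

(* For y_j = 0 the truncated exponent y_j - 1 is harmless: its coefficient is 0. *)
Definition monom_partial (n : nat) (y : cplx n) (j : 'I_n) (x : 'rV[R]_n) : R :=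
  (y j)%:R * monom x [ffun l => (y l - (l == j))%N].

Lemma monom_line (n : nat) (y : cplx n) (x : 'rV[R]_n) (j : 'I_n) (t : R) :
  monom (t *: 'e_j + x) y = (t + x 0 j) ^+ y j * \prod_(l < n | l != j) x 0 l ^+ y l.
Proof.
rewrite /monom (bigD1 j) //= !mxE !eqxx mulr1; congr (_ * _).
by apply: eq_bigr => l /negbTE lj; rewrite !mxE lj mulr0 add0r.
Qed.

Lemma is_derive_monom (n : nat) (y : cplx n) (x : 'rV[R]_n) (j : 'I_n) :
  is_derive x 'e_j (fun z => monom z y) (monom_partial y j x).
Proof.
apply: is_derive_along_line; under eq_fun do rewrite monom_line mulrC.
apply: is_derive_eq; first exact: is_deriveZ (is_derive_addX _ _).
rewrite /monom_partial /monom [in RHS](bigD1 j) //= ffunE eqxx subn1.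
rewrite [in RHS](eq_bigr (fun l => x 0 l ^+ y l)); last first.
  by move=> l /negbTE lj; rewrite ffunE lj subn0.
by rewrite [_ *: _]mulrC mulrA.
Qed.

Lemma differentiable_monom (n : nat) (y : cplx n) (x : 'rV[R]_n) :
  differentiable (fun z => monom z y) x.
Proof.
rewrite [X in differentiable X x](_ : _ = \prod_i (fun z : 'rV[R]_n => z 0 i ^+ y i)).
  apply: (big_ind (fun f => differentiable f x)).
  - exact: differentiable_cst.
  - by move=> f g df dg; apply: differentiableM.
  move=> i _; case: (y i) => [|p]; first exact: differentiable_cst.
  by rewrite -exprfctE; apply/differentiableX/differentiable_coord.
by rewrite fct_prodE.
Qed.

Lemma differentiable_massaction (n : nat) (G : seq (reaction n))
    (k : reaction n -> R) (x : 'rV[R]_n) :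
  differentiable (massaction G k) x.
Proof.
have -> : massaction G k = \sum_(r <- G) (fun z => (k r * monom z r.1) *: rvec R r).
  by rewrite fct_sumE.
apply: differentiable_big_sum => r; apply: differentiableZl; apply: differentiableM.
  exact: differentiable_cst.
exact: differentiable_monom.
Qed.

Lemma Dx_massaction (n : nat) (G : seq (reaction n)) (k : reaction n -> R)
    (x : 'rV[R]_n) (i j : 'I_n) :
  Dx (massaction G k) x i j =
  \sum_(r <- G) k r * rvec R r 0 i * monom_partial r.1 j x.
Proof.
have dF := differentiable_massaction G k x.
rewrite /Dx /jacobian !mxE -(deriveE _ dF) (derive_mx (diff_derivable dF)) mxE.
apply: derive_val.
rewrite [X in is_derive _ _ X](_ : _ =
  \sum_(r <- G) (k r * rvec R r 0 i) *: (fun z => monom z r.1)); last first.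
  apply: funext => z; rewrite fct_sumE /massaction summxE.
  by apply: eq_bigr => r _; rewrite !mxE /= mulrAC.
rewrite [X in is_derive _ _ _ X]
  (eq_bigr (fun r => (k r * rvec R r 0 i) *: monom_partial r.1 j x)) //.
elim/big_ind2 : _ => //; first exact: is_derive_cst.
  by move=> *; exact: is_deriveD.
by move=> r _; exact: is_deriveZ (is_derive_monom _ _ _).
Qed.

Lemma monom_partialE (n : nat) (y : cplx n) (j : 'I_n) (x : 'rV[R]_n) :
  x 0 j != 0 -> monom_partial y j x = monom x y * ((y j)%:R / x 0 j).
Proof.
move=> xj0; rewrite /monom_partial /monom (bigD1 j) //= [in RHS](bigD1 j) //=.
rewrite ffunE eqxx (eq_bigr (fun l => x 0 l ^+ y l)); last first.
  by move=> l /negbTE lj; rewrite ffunE lj subn0.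
case: (y j) => [|p]; first by rewrite !mul0r mulr0.
by rewrite subn1 /= exprS; field.
Qed.

End MassActionJacobian.

Section HomeostasisJacobian.
Variables (R : realType) (m : nat) (G : seq (reaction m.+2)).
Variables (k : reaction m.+2 -> R) (x : 'rV[R]_m.+2).
Hypothesis x_neq0 : forall l, x 0 l != 0.
Hypothesis homeo_det0 : forall s : 'I_m.+2 -> reaction m.+2,
  injective s -> (forall j, s j \in homeo_network G) ->
  det_cols (fun j => cplx_vec R (s j).1) * det_cols (fun j => rvec R (s j)) = 0.

Definition homeo_weights : seq (R * reaction m.+2) :=
  rcons [seq (k r * monom x r.1, hat_reaction r) | r <- G]
        (1, (unitc ord_max, unitc ord0)).

(* The Jacobian at x of the mass-action system of the homeostasis-associated
   network, with rate k r on the hat of each reaction r of G (reactions with a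
   common hat add up their rates) and rate 1 / x_n on X_n -> X_1. *)
Definition homeo_jacobian : 'M[R]_m.+2 :=
  \matrix_(i, j) \sum_(p <- homeo_weights) p.1 * rvec R p.2 0 i * ((p.2.1 j)%:R / x 0 j).

Lemma homeo_weights_mem (p : R * reaction m.+2) :
  p \in homeo_weights -> p.2 \in homeo_network G \/ p.2.1 = p.2.2.
Proof.
rewrite mem_rcons inE => /orP[/eqP -> | /mapP[r rG ->]] /=.
  by left; rewrite mem_undup mem_cat mem_seq1 eqxx orbT.
have [hat_trivial | hat_nontrivial] := eqVneq (hat_reaction r).1 (hat_reaction r).2.
  by right.
by left; rewrite mem_undup mem_cat mem_filter hat_nontrivial map_f.
Qed.

Lemma det_cols_homeo_eq0 (v : 'I_m.+2 -> reaction m.+2) :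
  (forall j, v j \in homeo_network G \/ (v j).1 = (v j).2) ->
  det_cols (fun j => rvec R (v j)) *
  det_cols (fun j => \row_l (((v j).1 l)%:R / x 0 l)) = 0.
Proof.
move=> v_homeo.
have [[j trivj] | nontriv] := pselect (exists j, (v j).1 = (v j).2).
  rewrite (@det_cols_zero_col _ _ _ j) ?mul0r //.
  by apply/matrixP => ? l; rewrite !mxE trivj subrr.
have v_in j : v j \in homeo_network G.
  by case: (v_homeo j) => // trivj; case: nontriv; exists j.
case: (boolP (injectiveb v)) => [/injectiveP v_inj | /injectivePn[j1 [j2 j12 vj12]]].
  have -> : det_cols (fun j => \row_l (((v j).1 l)%:R / x 0 l)) =
      \prod_l (x 0 l)^-1 * det_cols (fun j => cplx_vec R (v j).1).
    rewrite -det_cols_scale_rows; congr det_cols; apply: funext => j.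
    by apply/matrixP => ? l; rewrite !mxE mulrC.
  by rewrite mulrCA [_ * det_cols _]mulrC homeo_det0 // mulr0.
by rewrite (det_cols_alternate (v := fun j => rvec R (v j)) j12) ?mul0r // vj12.
Qed.

Lemma det_homeo_jacobian_eq0 : \det homeo_jacobian = 0.
Proof.
pose d : R * reaction m.+2 := (0, (unitc ord_max, unitc ord0)).
pose rho (t : 'I_(size homeo_weights)) := (nth d homeo_weights t).2.
have -> : homeo_jacobian = \matrix_(i, j) \sum_(t < size homeo_weights)
    (nth d homeo_weights t).1 * rvec R (rho t) 0 i *
    (\row_l (((rho t).1 l)%:R / x 0 l)) 0 j.
  apply/matrixP => i j; rewrite !mxE (big_nth d) big_mkord.
  by apply: eq_bigr => t _; rewrite mxE.
apply: det_sum_outer_eq0 => s; apply: det_cols_homeo_eq0 => j.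
by apply: homeo_weights_mem; exact: mem_nth.
Qed.

Lemma homeo_jacobian_row0 (j : 'I_m.+2) :
  homeo_jacobian ord0 j = (j == ord_max)%:R / x 0 j.
Proof.
rewrite mxE /homeo_weights big_rcons big_map big1 => [|r _].
  by rewrite /= !mxE /unitc !ffunE eqxx /= add0r subr0 !mul1r.
by rewrite !mxE /hat_reaction /= ffunE eqxx subrr mulr0 mul0r.
Qed.

Lemma homeo_jacobianE (i j : 'I_m.+2) : i != ord0 -> j != ord_max ->
  homeo_jacobian i j = Dx (massaction G k) x i j.
Proof.
move=> i0 jmax; rewrite mxE /homeo_weights big_rcons big_map Dx_massaction.
rewrite /= /unitc ffunE (negbTE jmax) mul0r mulr0 addr0; apply: eq_bigr => r _.
rewrite monom_partialE // /rvec !mxE /hat_reaction /= ffunE (negbTE i0).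
by rewrite -!mulrA; congr (_ * _); exact: mulrCA.
Qed.

Lemma det_delete_first_row_last_col_Dx_eq0 :
  \det (delete_first_row_last_col (Dx (massaction G k) x)) = 0.
Proof.
have := det_homeo_jacobian_eq0.
rewrite expand_det_row0_last => [|j jmax]; last first.
  by rewrite homeo_jacobian_row0 (negbTE jmax) mul0r.
rewrite homeo_jacobian_row0 eqxx /cofactor.
have -> : row' ord0 (col' ord_max homeo_jacobian) =
    delete_first_row_last_col (Dx (massaction G k) x).
  apply/matrixP => i j; rewrite [in LHS]mxE [in LHS]mxE homeo_jacobianE;
    try by rewrite eq_sym neq_lift.
  by rewrite /delete_first_row_last_col [in RHS]mxE [in RHS]mxE.
move/eqP; rewrite !mulf_eq0 invr_eq0.
by rewrite (negbTE (x_neq0 _)) signr_eq0 oner_eq0 /= => /eqP.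
Qed.

End HomeostasisJacobian.

Section PerfectHomeostasis.
Variable R : realType.

Lemma linearly_stable_det_neq0 (n : nat) (J : 'M[R]_n) :
  linearly_stable J -> \det J != 0.
Proof.
move=> stable; apply/negP => /eqP detJ0.
have : eigenvalue (map_mx (fun a : R => complex.Complex a 0) J) 0.
  apply/eigenvalueP; have /det0P[v v0 vJ] : \det (map_mx (real_complex R) J) == 0.
    by rewrite det_map_mx detJ0 rmorph0.
  by exists v; rewrite // vJ scale0r.
by move/stable; rewrite ltxx.
Qed.

Lemma continuous_Dx_massaction (n : nat) (G : seq (reaction n))
    (k : reaction n -> R) (i j : 'I_n) :
  continuous (fun x => Dx (massaction G k) x i j).
Proof.
have -> : (fun x => Dx (massaction G k) x i j) =
    \sum_(r <- G) (fun x => k r * rvec R r 0 i * monom_partial r.1 j x).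
  by rewrite fct_sumE; apply: funext => x; exact: Dx_massaction.
move=> x; apply: differentiable_continuous; apply: differentiable_big_sum => r.
apply: differentiableM; first exact: differentiable_cst.
apply: differentiableM; first exact: differentiable_cst.
exact: differentiable_monom.
Qed.

Lemma Dx_mul_derive_branch (n : nat) (F : 'rV[R]_n -> 'rV[R]_n)
    (X : R -> 'rV[R]_n) (c : 'rV[R]_n) (z : R) :
  differentiable X z -> differentiable F (X z) ->
  (\forall u \near z, F (X u) + u *: c = 0) ->
  Dx F (X z) *m ('D_1 X z)^T = - c^T.
Proof.
move=> dX dF branch.
have dFX : differentiable (F \o X) z by exact: differentiable_comp.
have dc : differentiable (fun u : R => u *: c) z by exact: ex_diff.
have DFX : 'D_1 (F \o X) z = 'D_1 X z *m jacobian F (X z).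
  rewrite (deriveE _ dFX) (diff_comp dX dF) /= -(deriveE _ dX).
  by rewrite -(deriveEjacobian _ dF) (deriveE _ dF).
have Dc : 'D_1 (fun u : R => u *: c) z = c.
  by rewrite (deriveE _ dc) diff_val scale1r.
have D0 : 'D_1 (fun u => F (X u) + u *: c) z = 0.
  by rewrite (near_eq_derive _ (branch : \forall u \near z, _ = cst 0 u)) derive_cst.
have : 'D_1 X z *m jacobian F (X z) + c = 0.
  rewrite -DFX -Dc -D0; apply/esym; apply: deriveD; exact: diff_derivable.
by move/(congr1 trmx)/eqP; rewrite raddfD /= trmx_mul trmx0 addr_eq0 => /eqP.
Qed.

Lemma output_derive_eq0 (m : nat) (F : 'rV[R]_m.+2 -> 'rV[R]_m.+2)
    (X : R -> 'rV[R]_m.+2) (z : R) :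
  differentiable X z -> differentiable F (X z) ->
  (\forall u \near z, F (X u) + u *: delta_mx 0 ord0 = 0) ->
  \det (Dx F (X z)) != 0 ->
  \det (delete_first_row_last_col (Dx F (X z))) = 0 ->
  is_derive z 1 (fun t => X t 0 ord_max) 0.
Proof.
move=> dX dF branch detD detB.
have : Dx F (X z) *m - ('D_1 X z)^T = delta_mx ord0 0.
  by rewrite mulmxN (Dx_mul_derive_branch dX dF branch) opprK trmx_delta.
move/cramer_delta => /(_ ord_max); rewrite /cofactor -/(delete_first_row_last_col _).
rewrite detB mulr0 => /eqP; rewrite mulf_eq0 (negbTE detD) !mxE oppr_eq0 /= => /eqP DX0.
have dXz : derivable X z 1 := diff_derivable dX.
apply: DeriveDef; first by move/derivable_mxP : dXz; apply.
by rewrite -DX0 (derive_mx dXz) mxE.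
Qed.

Lemma perfect_homeostasis (m : nat) (G : seq (reaction m.+2))
    (k : reaction m.+2 -> R) :
  (forall x : 'rV[R]_m.+2, (forall i, 0 < x 0 i) ->
     \det (delete_first_row_last_col (Dx (massaction G k) x)) = 0) ->
  forall (xt : 'rV[R]_m.+2) (zt : R), (forall i, 0 < xt 0 i) ->
  linearly_stable (Dx (massaction G k) xt) ->
  forall X : R -> 'rV[R]_m.+2, X zt = xt ->
  (exists2 e : R, 0 < e & forall z : R, `|z - zt| < e ->
     derivable X z 1 /\ massaction G k (X z) + z *: delta_mx 0 ord0 = 0) ->
  exists2 d : R, 0 < d & forall z : R, `|z - zt| < d ->
     is_derive z 1 (fun t => X t 0 ord_max) 0.
Proof.
move=> detB xt zt xt_pos stable X Xzt [e e_gt0 branch].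
have cX : {for zt, continuous X}.
  apply/differentiable_continuous/derivable1_diffP.
  by have [] := branch zt; rewrite // subrr normr0.
have near_branch : \forall z \near zt, `|z - zt| < e.
  by apply/nbhs_normP; exists e => // z /=; rewrite distrC.
have near_pos : \forall z \near zt, forall i, 0 < X z 0 i.
  apply: (@filter_forall R _ (fun i z => 0 < X z 0 i) (nbhs zt) _) => i.
  have cXi : {for zt, continuous (fun z => X z 0 i)}.
    exact: (continuous_comp cX (@coord_continuous _ _ _ 0 i (X zt))).
  by apply: (cvgr_gt _ cXi); rewrite Xzt xt_pos.
have near_det : \forall z \near zt, \det (Dx (massaction G k) (X z)) != 0.
  have cdet : {for zt, continuous (fun z => \det (Dx (massaction G k) (X z)))}.
    apply: continuous_det => i j.
    apply: (@continuous_comp _ _ _ X (fun x => Dx (massaction G k) x i j)) => //.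
    exact: continuous_Dx_massaction.
  by apply: (cvgr_neq0 _ cdet); rewrite Xzt; exact: linearly_stable_det_neq0.
have : \forall z \near zt, [/\ `|z - zt| < e, forall i, 0 < X z 0 i
                             & \det (Dx (massaction G k) (X z)) != 0].
  by near=> z; split; near: z.
case/nbhs_normP => d d_gt0 near_d; exists d => // z zd.
have [ze X_pos det_neq0] : [/\ `|z - zt| < e, forall i, 0 < X z 0 i
                             & \det (Dx (massaction G k) (X z)) != 0].
  by apply: near_d; rewrite /= distrC.
have [dX _] := branch z ze.
apply: output_derive_eq0 (detB _ X_pos) => //.
- exact/derivable1_diffP.
- exact: differentiable_massaction.
apply/nbhs_normP; exists (e - `|z - zt|); first by rewrite /= subr_gt0.
move=> u /= zu; have /branch[] // : `|u - zt| < e.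
by have := ler_distD z u zt; rewrite (distrC u z); lra.
Unshelve. all: by end_near.
Qed.

End PerfectHomeostasis.

Theorem mainTheorem3 (R : realType) (m : nat) (G : seq (reaction m.+2)) :
  is_network G ->
  (forall s : 'I_m.+2 -> reaction m.+2,
      injective s -> (forall j, s j \in homeo_network G) ->
      det_cols (fun j => cplx_vec R (s j).1) *
      det_cols (fun j => rvec R (s j)) = 0) ->
  forall k : reaction m.+2 -> R, (forall r, r \in G -> 0 < k r) ->
  (forall x : 'rV[R]_m.+2, (forall i, 0 < x 0 i) ->
     \det (delete_first_row_last_col (Dx (massaction G k) x)) = 0)
  /\
  (forall (xt : 'rV[R]_m.+2) (zt : R),
     (forall i, 0 < xt 0 i) ->
     massaction G k xt + zt *: delta_mx 0 ord0 = 0 ->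
     linearly_stable (Dx (massaction G k) xt) ->
     forall X : R -> 'rV[R]_m.+2,
       X zt = xt ->
       (exists2 e : R, 0 < e & forall z : R, `|z - zt| < e ->
          derivable X z 1 /\ massaction G k (X z) + z *: delta_mx 0 ord0 = 0) ->
       exists2 d : R, 0 < d & forall z : R, `|z - zt| < d ->
          is_derive z 1 (fun t => X t 0 ord_max) 0).
Proof.
move=> _ homeo_det0 k _.
have detB (x : 'rV[R]_m.+2) : (forall i, 0 < x 0 i) ->
    \det (delete_first_row_last_col (Dx (massaction G k) x)) = 0.
  move=> x_pos; apply: det_delete_first_row_last_col_Dx_eq0 homeo_det0 => i.
  exact: lt0r_neq0.
split=> // xt zt xt_pos _; exact: perfect_homeostasis.
Qed.
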